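(* For $t\in\mathbb C$ let $f_t(z)=\sqrt{z^2-z+t}$ (principal branch, holomorphic near $z=0$ when $t\notin(-\infty,0]$) and let $f_t(z)=\sum_{n\ge0}\hat f_n(t)z^n$ be its Taylor expansion at $0$. Fix $0<r<1/4$ and $M>0$. Then there exists $N=N(r,M)$ such that $$\max_{1\le n\le N}|\hat f_n(t)|>M$$ for all $t\in\mathbb C$ with $|t-1/4|=r$.
   Context: $\sqrt{\cdot}$ denotes the principal branch: $\sqrt z=|z|^{1/2}e^{i(\arg z)/2}$ with $\arg z\in(-\pi,\pi]$. Note that for $|t-1/4|=r<1/4$ one has $\operatorname{Re}t>0$, so $f_t$ is holomorphic near $0$. *)

From Stdlib Require Import Reals Lra.
Open Scope R_scope.

Definition CC : Type := (R * R)%type.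

Definition Cre (z : CC) : R := fst z.
Definition Cim (z : CC) : R := snd z.
Definition RtoC (x : R) : CC := (x, 0).
Definition C0 : CC := (0, 0).
Definition C1 : CC := (1, 0).
Definition Cadd (z w : CC) : CC := (Cre z + Cre w, Cim z + Cim w).
Definition Copp (z : CC) : CC := (- Cre z, - Cim z).
Definition Csub (z w : CC) : CC := Cadd z (Copp w).
Definition Cmul (z w : CC) : CC :=
  (Cre z * Cre w - Cim z * Cim w, Cre z * Cim w + Cim z * Cre w).
Fixpoint Cpow (z : CC) (n : nat) : CC :=
  match n with O => C1 | S m => Cmul z (Cpow z m) end.
Definition Cmod (z : CC) : R := sqrt (Cre z ^ 2 + Cim z ^ 2).

(* Principal argument, with values in (-PI, PI] (for z <> 0). *)
Definition Carg (z : CC) : R :=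
  if Rle_dec 0 (Cim z) then acos (Cre z / Cmod z) else - acos (Cre z / Cmod z).

Definition Cexpi (theta : R) : CC := (cos theta, sin theta).

Definition Csqrt (z : CC) : CC := Cmul (RtoC (sqrt (Cmod z))) (Cexpi (Carg z / 2)).

Fixpoint Cpsum (a : nat -> CC) (z : CC) (N : nat) : CC :=
  match N with
  | O => Cmul (a O) (Cpow z O)
  | S m => Cadd (Cpsum a z m) (Cmul (a (S m)) (Cpow z (S m)))
  end.

Definition Ccv (u : nat -> CC) (l : CC) : Prop :=
  forall eps : R, eps > 0 -> exists N : nat, forall n : nat, (n >= N)%nat ->
    Cmod (Csub (u n) l) < eps.

(* a is the sequence of Taylor coefficients of f at 0: the power series
   sum_n a_n z^n converges to f z on some disc |z| < rho, rho > 0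
   (power series representations at 0 are unique, so a_n = f^{(n)}(0)/n!). *)
Definition is_taylor_at0 (f : CC -> CC) (a : nat -> CC) : Prop :=
  exists rho : R, rho > 0 /\
    forall z : CC, Cmod z < rho -> Ccv (Cpsum a z) (f z).

Definition f_t (t : CC) (z : CC) : CC :=
  Csqrt (Cadd (Csub (Cpow z 2) z) t).

From Pilot Require Import Defs.
From Stdlib Require Import Reals Lra Lia Psatz Classical.
From Coquelicot Require Complex.
Open Scope R_scope.

(* Lemma 5.7.  Write q_t(z) = z^2 - z + t, so that f_t^2 = q_t.

   By uniqueness of power-series coefficients, the Taylor coefficients a of f_t
   satisfy the Cauchy-product identity a * a = (t, -1, 1, 0, 0, ...); in
   particular a_0^2 = t, so |a_0| <= 1.  Suppose |a_k| <= B for all k <= N.  On a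
   disc |z| <= rho < 1 the partial sum P_N then satisfies |P_N^2 - q_t| <= eps_N
   with eps_N = O(N rho^N), and P_N is Lipschitz with constant L = B/(1-rho)^2.
   The roots w = 1/2 + s, s^2 = 1/4 - t, of q_t have |w| <= 1/2 + sqrt r < 1, and
   at z = w + h one has |q_t(z)| >= h sqrt r.  Hence
     h sqrt r <= |P_N(z)|^2 + eps_N <= 2 |P_N(w)|^2 + 2 L^2 h^2 + eps_N
              <= 3 eps_N + h sqrt r / 2,
   i.e. h sqrt r <= 6 eps_N.  As rho, L and h depend only on r and B = M + 1,
   taking N so large that 6 eps_N < h sqrt r gives N(r, M). *)

Lemma CC_ring : ring_theory C0 Defs.C1 Cadd Cmul Csub Copp (@eq CC).
Proof.
  constructor; intros; repeat match goal with z : CC |- _ => destruct z end;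
    unfold Csub, C0, Defs.C1, Cadd, Cmul, Copp, Cre, Cim; simpl; f_equal; ring.
Qed.
Add Ring CC_ring : CC_ring.

(* Basic properties of the modulus; [Cmod] is Coquelicot's modulus on R * R. *)
Lemma CmodM z w : Cmod (Cmul z w) = Cmod z * Cmod w.
Proof. exact (Complex.Cmod_mult z w). Qed.

Lemma CmodD z w : Cmod (Cadd z w) <= Cmod z + Cmod w.
Proof. exact (Complex.Cmod_triangle z w). Qed.

Lemma CmodN z : Cmod (Copp z) = Cmod z.
Proof. exact (Complex.Cmod_opp z). Qed.

Lemma Cmod_ge0 z : 0 <= Cmod z.
Proof. exact (Complex.Cmod_ge_0 z). Qed.

Lemma Cmod_eq0 z : Cmod z = 0 -> z = C0.
Proof. exact (Complex.Cmod_eq_0 z). Qed.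

Lemma CmodR x : Cmod (RtoC x) = Rabs x.
Proof. exact (Complex.Cmod_R x). Qed.

Lemma CmodB z w : Cmod (Csub z w) <= Cmod z + Cmod w.
Proof. unfold Csub. rewrite <- (CmodN w). apply CmodD. Qed.

Lemma CmodB_sym z w : Cmod (Csub z w) = Cmod (Csub w z).
Proof. replace (Csub z w) with (Copp (Csub w z)) by ring. apply CmodN. Qed.

Lemma CmodB_tri z w u : Cmod (Csub z w) <= Cmod (Csub z u) + Cmod (Csub u w).
Proof. replace (Csub z w) with (Cadd (Csub z u) (Csub u w)) by ring. apply CmodD. Qed.

Lemma CmodB_rev z w : Cmod z - Cmod w <= Cmod (Csub z w).
Proof.
  pose proof (CmodD (Csub z w) w) as Htri. replace (Cadd (Csub z w) w) with z in Htri by ring. lra.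
Qed.

Lemma Cpow_add z n m : Cpow z (n + m) = Cmul (Cpow z n) (Cpow z m).
Proof. induction n; simpl; [ring | rewrite IHn; ring]. Qed.

Lemma Cmod_pow z n : Cmod (Cpow z n) = Cmod z ^ n.
Proof.
  induction n; simpl.
  - change Defs.C1 with (RtoC 1). rewrite CmodR. apply Rabs_R1.
  - rewrite CmodM, IHn. ring.
Qed.

Lemma Cmod_monomial c x k : 0 <= x -> Cmod (Cmul c (Cpow (RtoC x) k)) = Cmod c * x ^ k.
Proof. intro. rewrite CmodM, Cmod_pow, CmodR, Rabs_pos_eq; auto. Qed.

Lemma pow_le_one x n : 0 <= x <= 1 -> x ^ n <= 1.
Proof. intro. rewrite <- (pow1 n). apply pow_incr. lra. Qed.

Lemma pow_decr x m n : 0 <= x <= 1 -> (m <= n)%nat -> x ^ n <= x ^ m.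
Proof.
  intros Hx Hmn. replace n with (m + (n - m))%nat by lia. rewrite pow_add.
  pose proof (pow_le x m ltac:(lra)). pose proof (pow_le_one x (n - m) Hx).
  pose proof (pow_le x (n - m) ltac:(lra)). nra.
Qed.

Lemma le_small_eq0 c K s : 0 < s -> 0 <= c -> (forall x, 0 < x <= s -> c <= K * x) -> c = 0.
Proof.
  intros Hs Hc Hb. destruct (Req_dec c 0) as [|Hc0]; auto. exfalso.
  set (x := Rmin s (c / (2 * (Rabs K + 1)))).
  assert (HK : 0 < 2 * (Rabs K + 1)) by (pose proof (Rabs_pos K); lra).
  assert (Hx : 0 < x) by (apply Rmin_pos; [lra | apply Rdiv_lt_0_compat; lra]).
  assert (Hxc : x * (2 * (Rabs K + 1)) <= c).
  { apply Rmult_le_reg_r with (/ (2 * (Rabs K + 1))); [apply Rinv_0_lt_compat; lra|].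
    rewrite Rmult_assoc, Rinv_r by lra. rewrite Rmult_1_r. apply Rmin_r. }
  specialize (Hb x (conj Hx (Rmin_l _ _))). pose proof (Rle_abs K). nra.
Qed.

Fixpoint csum (f : nat -> CC) (n : nat) : CC :=
  match n with O => f O | S m => Cadd (csum f m) (f (S m)) end.

Lemma Cpsum_csum a z N : Cpsum a z N = csum (fun k => Cmul (a k) (Cpow z k)) N.
Proof. induction N; simpl; congruence. Qed.

Lemma csum_S f n : csum f (S n) = Cadd (csum f n) (f (S n)).
Proof. reflexivity. Qed.

Lemma Cpsum_S a z n :
  Cpsum a z (S n) = Cadd (Cpsum a z n) (Cmul (a (S n)) (Cpow z (S n))).
Proof. reflexivity. Qed.

Lemma csum_ext f g n : (forall k, (k <= n)%nat -> f k = g k) -> csum f n = csum g n.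
Proof. induction n; intro H; simpl; [apply H; lia | rewrite IHn, H; auto]. Qed.

Lemma csum_add f g n : csum (fun k => Cadd (f k) (g k)) n = Cadd (csum f n) (csum g n).
Proof. induction n; simpl; [reflexivity | rewrite IHn; ring]. Qed.

Lemma csum_sub f g n : csum (fun k => Csub (f k) (g k)) n = Csub (csum f n) (csum g n).
Proof. induction n; simpl; [reflexivity | rewrite IHn; ring]. Qed.

Lemma csum_mulr f c n : Cmul (csum f n) c = csum (fun k => Cmul (f k) c) n.
Proof. induction n; simpl; [reflexivity | rewrite <- IHn; ring]. Qed.

Lemma csum_norm f n : Cmod (csum f n) <= sum_f_R0 (fun k => Cmod (f k)) n.
Proof. induction n; simpl; [lra | eapply Rle_trans; [apply CmodD | lra]]. Qed.

Definition cauchy_sq (a : nat -> CC) (n : nat) : CC :=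
  csum (fun k => Cmul (a k) (a (n - k)%nat)) n.

(* What the square of the N-th partial sum has beyond the degree-N truncation
   of the Cauchy square. *)
Definition square_rem (a : nat -> CC) (z : CC) (N : nat) : CC :=
  csum (fun k => Cmul (Cmul (a k) (Cpow z k)) (Csub (Cpsum a z N) (Cpsum a z (N - k)))) N.

(* The error bound obtained below for [square_rem] when |a_k z^k| <= B th^k. *)
Definition square_error (th B : R) (N : nat) : R :=
  INR (S N) * (B * B * th ^ S N / (1 - th)).

Lemma cauchy_triangle a z N :
  csum (fun k => Cmul (Cmul (a k) (Cpow z k)) (Cpsum a z (N - k))) N =
  csum (fun n => Cmul (cauchy_sq a n) (Cpow z n)) N.
Proof.
  induction N.
  - simpl. unfold cauchy_sq; simpl. ring.
  - rewrite csum_S, Nat.sub_diag.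
    rewrite (csum_ext _ (fun k => Cadd (Cmul (Cmul (a k) (Cpow z k)) (Cpsum a z (N - k)))
       (Cmul (Cmul (a k) (a (S N - k)%nat)) (Cpow z (S N))))).
    2:{ intros k Hk. replace (S N - k)%nat with (S (N - k)) by lia. rewrite Cpsum_S.
        replace (Cpow z (S N)) with (Cmul (Cpow z k) (Cpow z (S (N - k)))).
        { ring. }
        rewrite <- Cpow_add. f_equal. lia. }
    rewrite csum_add, IHN, (csum_S _ N). unfold cauchy_sq at 3. rewrite csum_S.
    rewrite Nat.sub_diag, <- csum_mulr. change (Cpsum a z 0) with (Cmul (a 0%nat) Defs.C1). ring.
Qed.

Lemma partial_square a z N :
  Cmul (Cpsum a z N) (Cpsum a z N) =
  Cadd (csum (fun n => Cmul (cauchy_sq a n) (Cpow z n)) N) (square_rem a z N).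
Proof.
  rewrite <- cauchy_triangle. unfold square_rem. rewrite <- csum_add.
  rewrite (Cpsum_csum a z N) at 1. rewrite csum_mulr.
  apply csum_ext. intros. ring.
Qed.

Section GeometricBounds.
Variables (a : nat -> CC) (z : CC) (N : nat) (B th : R).
Hypothesis HB : 0 <= B.
Hypothesis Hth : 0 <= th < 1.
Hypothesis Hterm : forall k, (k <= N)%nat -> Cmod (Cmul (a k) (Cpow z k)) <= B * th ^ k.

Lemma partial_sum_increment m d : (m + d <= N)%nat ->
  Cmod (Csub (Cpsum a z (m + d)) (Cpsum a z m)) <= B * (th ^ S m - th ^ S (m + d)) / (1 - th).
Proof.
  induction d; intro Hmd.
  - rewrite Nat.add_0_r. replace (Csub (Cpsum a z m) (Cpsum a z m)) with C0 by ring.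
    change C0 with (RtoC 0).
    rewrite CmodR, Rabs_R0, Rminus_diag. lra.
  - rewrite Nat.add_succ_r, Cpsum_S.
    replace (Csub (Cadd (Cpsum a z (m + d)) (Cmul (a (S (m + d))) (Cpow z (S (m + d))))) (Cpsum a z m))
      with (Cadd (Csub (Cpsum a z (m + d)) (Cpsum a z m)) (Cmul (a (S (m + d))) (Cpow z (S (m + d)))))
      by ring.
    eapply Rle_trans; [apply CmodD|].
    pose proof (IHd ltac:(lia)). pose proof (Hterm (S (m + d)) ltac:(lia)).
    replace (B * (th ^ S m - th ^ S (S (m + d))) / (1 - th)) with
      (B * (th ^ S m - th ^ S (m + d)) / (1 - th) + B * th ^ S (m + d)) by (simpl; field; lra).
    lra.
Qed.

Lemma partial_sum_tail m n : (m <= n <= N)%nat ->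
  Cmod (Csub (Cpsum a z n) (Cpsum a z m)) <= B * th ^ S m / (1 - th).
Proof.
  intro Hmn. replace n with (m + (n - m))%nat by lia.
  eapply Rle_trans; [apply partial_sum_increment; lia|].
  pose proof (pow_le th (S (m + (n - m))) ltac:(lra)).
  unfold Rdiv. apply Rmult_le_compat_r; [left; apply Rinv_0_lt_compat; lra | nra].
Qed.

Lemma partial_sum_bound n : (n <= N)%nat -> Cmod (Cpsum a z n) <= B / (1 - th).
Proof.
  intro Hn. pose proof (partial_sum_tail 0 n ltac:(lia)) as Htail.
  pose proof (Hterm 0 ltac:(lia)) as H0. simpl in H0, Htail.
  replace (Cpsum a z n) with (Cadd (Csub (Cpsum a z n) (Cpsum a z 0)) (Cpsum a z 0)) by ring.
  eapply Rle_trans; [apply CmodD|]. simpl Cpsum.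
  replace (B / (1 - th)) with (B * (th * 1) / (1 - th) + B * 1) by (field; lra). lra.
Qed.

Lemma square_rem_bound : Cmod (square_rem a z N) <= square_error th B N.
Proof.
  unfold square_rem, square_error. eapply Rle_trans; [apply csum_norm|].
  rewrite Rmult_comm, <- sum_cte. apply sum_Rle. intros k Hk. rewrite CmodM.
  pose proof (partial_sum_tail (N - k) N ltac:(lia)) as Htail.
  pose proof (Hterm k Hk).
  replace (B * B * th ^ S N / (1 - th)) with (B * th ^ k * (B * th ^ S (N - k) / (1 - th))).
  - apply Rmult_le_compat; auto using Cmod_ge0.
  - replace (S N) with (k + S (N - k))%nat by lia. rewrite pow_add. field. lra.
Qed.

End GeometricBounds.

Lemma Cmod_sq z : Cmod z ^ 2 = Cre z ^ 2 + Cim z ^ 2.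
Proof. unfold Cmod. apply pow2_sqrt. nra. Qed.

Lemma Carg_polar w : Cmod w * cos (Carg w) = Cre w /\ Cmod w * sin (Carg w) = Cim w.
Proof.
  pose proof (Cmod_sq w) as Hsq. pose proof (Cmod_ge0 w) as Hm.
  set (m := Cmod w) in *. set (x := Cre w) in *. set (y := Cim w) in *.
  destruct (Req_dec m 0) as [Hm0|Hm0].
  { rewrite Hm0 in *. assert (x = 0 /\ y = 0) as [-> ->] by nra. lra. }
  assert (Hc : -1 <= x / m <= 1).
  { split; apply Rmult_le_reg_r with m; try lra; unfold Rdiv;
      rewrite Rmult_assoc, Rinv_l by lra; nra. }
  assert (Hs : m * sqrt (1 - (x / m)²) = Rabs y).
  { replace (1 - (x / m)²) with ((y / m)²)
      by (unfold Rsqr; apply Rmult_eq_reg_r with (m * m); [|nra];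
          field_simplify; try lra; nra).
    unfold Rdiv. rewrite sqrt_Rsqr_abs, Rabs_mult, Rabs_inv, (Rabs_pos_eq m) by lra. field. lra. }
  unfold Carg. fold m x y. destruct (Rle_dec 0 y).
  - rewrite cos_acos, sin_acos by auto. rewrite Hs, Rabs_pos_eq by lra. split; [field|]; lra.
  - rewrite cos_neg, sin_neg, cos_acos, sin_acos by auto.
    rewrite Ropp_mult_distr_r_reverse, Hs, Rabs_left by lra. split; [field|]; lra.
Qed.

(* The principal square root is a square root (by the double-angle formulas). *)
Lemma Csqrt_sq w : Cmul (Csqrt w) (Csqrt w) = w.
Proof.
  destruct (Carg_polar w) as [Hre Him].
  pose proof (sqrt_sqrt (Cmod w) (Cmod_ge0 w)) as Hsqrt.
  set (th := Carg w) in *. replace th with (2 * (th / 2)) in Hre, Him by field.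
  rewrite cos_2a in Hre. rewrite sin_2a in Him.
  destruct w as [u v]. unfold Csqrt, Cexpi, Cmul, RtoC, Cre, Cim in *; simpl in *.
  fold th. f_equal; nra.
Qed.

Lemma Cmod_Csqrt w : Cmod (Csqrt w) = sqrt (Cmod w).
Proof.
  rewrite <- (Csqrt_sq w) at 2. rewrite CmodM, sqrt_square; auto using Cmod_ge0.
Qed.

Lemma limit_le u L P c N : Ccv u L -> (forall m, (m >= N)%nat -> Cmod (Csub (u m) P) <= c) ->
  Cmod (Csub L P) <= c.
Proof.
  intros Hcv Hb. apply Rle_plus_epsilon. intros eps He.
  destruct (Hcv eps He) as [N0 HN0]. specialize (HN0 (max N N0) ltac:(lia)).
  specialize (Hb (max N N0) ltac:(lia)).
  eapply Rle_trans; [apply (CmodB_tri _ _ (u (max N N0)))|]. rewrite CmodB_sym in HN0. lra.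
Qed.

Lemma sum_term_le (f : nat -> R) n k : (forall i, 0 <= f i) -> (k <= n)%nat -> f k <= sum_f_R0 f n.
Proof.
  intros Hf Hk. induction n.
  - replace k with 0%nat by lia. simpl. lra.
  - rewrite tech5. pose proof (Hf (S n)). pose proof (cond_pos_sum f n Hf).
    destruct (Nat.eq_dec k (S n)) as [->|]; [lra|]. pose proof (IHn ltac:(lia)). lra.
Qed.

Lemma convergent_terms_bounded a z L : Ccv (Cpsum a z) L ->
  exists B, 0 <= B /\ forall n, Cmod (Cmul (a n) (Cpow z n)) <= B.
Proof.
  intro Hcv. destruct (Hcv 1 ltac:(lra)) as [N0 HN0].
  set (f k := Cmod (Cmul (a k) (Cpow z k))).
  assert (Hf : forall k, 0 <= f k) by (intro; apply Cmod_ge0).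
  exists (2 + sum_f_R0 f N0). pose proof (cond_pos_sum f N0 Hf).
  split; [lra|]. intro n. fold (f n). destruct (Compare_dec.le_lt_dec n N0) as [Hn|Hn].
  - pose proof (sum_term_le f N0 n Hf Hn). lra.
  - destruct n as [|n]; [lia|].
    pose proof (HN0 (S n) ltac:(lia)). pose proof (HN0 n ltac:(lia)).
    change (f (S n)) with (Cmod (Cmul (a (S n)) (Cpow z (S n)))).
    replace (Cmul (a (S n)) (Cpow z (S n))) with
      (Csub (Csub (Cpsum a z (S n)) L) (Csub (Cpsum a z n) L)) by (rewrite Cpsum_S; ring).
    pose proof (CmodB (Csub (Cpsum a z (S n)) L) (Csub (Cpsum a z n) L)). lra.
Qed.

Lemma limit_tail a z F N B th : 0 <= B -> 0 <= th < 1 ->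
  (forall k, Cmod (Cmul (a k) (Cpow z k)) <= B * th ^ k) ->
  Ccv (Cpsum a z) F -> Cmod (Csub F (Cpsum a z N)) <= B * th ^ S N / (1 - th).
Proof.
  intros HB Hth Hb Hcv. apply (limit_le _ _ _ _ N Hcv). intros m Hm.
  exact (partial_sum_tail a z m B th HB Hth (fun k _ => Hb k) N m ltac:(lia)).
Qed.

Lemma div_one_minus_le c th : 0 <= c -> 0 <= th <= 1/2 -> c / (1 - th) <= 2 * c.
Proof.
  intros Hc Hth. apply Rmult_le_reg_r with (1 - th); [lra|].
  unfold Rdiv. rewrite Rmult_assoc, Rinv_l by lra. nra.
Qed.

Lemma truncated_square_vs_limit a z F N B th : 0 <= B -> 0 <= th <= 1/2 ->
  (forall k, Cmod (Cmul (a k) (Cpow z k)) <= B * th ^ k) -> Ccv (Cpsum a z) F ->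
  Cmod (Csub (csum (fun n => Cmul (cauchy_sq a n) (Cpow z n)) N) (Cmul F F))
    <= (12 + 2 * INR (S N)) * (B * B) * th ^ S N.
Proof.
  intros HB Hth Hb Hcv. set (P := Cpsum a z N).
  assert (Hpow : 0 <= th ^ S N <= 1) by (split; [apply pow_le | apply pow_le_one]; lra).
  assert (HFP : Cmod (Csub F P) <= 2 * (B * th ^ S N)).
  { eapply Rle_trans; [apply (limit_tail a z F N B th); auto; lra|].
    apply div_one_minus_le; [apply Rmult_le_pos|]; lra. }
  assert (HP : Cmod P <= 2 * B).
  { eapply Rle_trans; [apply (partial_sum_bound a z N B th HB ltac:(lra) (fun k _ => Hb k) N); lia|].
    apply div_one_minus_le; lra. }
  assert (Hrem : Cmod (square_rem a z N) <= 2 * INR (S N) * (B * B) * th ^ S N).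
  { eapply Rle_trans; [apply (square_rem_bound a z N B th HB ltac:(lra) (fun k _ => Hb k))|].
    unfold square_error. pose proof (pos_INR (S N)).
    pose proof (div_one_minus_le (B * B * th ^ S N) th ltac:(apply Rmult_le_pos; nra) Hth).
    nra. }
  assert (Hsum : Cmod (Cadd (Cadd P P) (Csub F P)) <= 6 * B).
  { eapply Rle_trans; [apply CmodD|]. pose proof (CmodD P P). nra. }
  replace (csum (fun n => Cmul (cauchy_sq a n) (Cpow z n)) N) with (Csub (Cmul P P) (square_rem a z N))
    by (unfold P; rewrite partial_square; ring).
  replace (Csub (Csub (Cmul P P) (square_rem a z N)) (Cmul F F)) with
    (Csub (Copp (Cmul (Csub F P) (Cadd (Cadd P P) (Csub F P)))) (square_rem a z N)) by ring.
  eapply Rle_trans; [apply CmodB|]. rewrite CmodN, CmodM.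
  assert (Cmod (Csub F P) * Cmod (Cadd (Cadd P P) (Csub F P)) <= 2 * (B * th ^ S N) * (6 * B))
    by (apply Rmult_le_compat; auto using Cmod_ge0).
  nra.
Qed.

Lemma Cpsum_zero e z n : (forall k, (k <= n)%nat -> e k = C0) -> Cpsum e z n = C0.
Proof.
  induction n as [|n IH]; intro He.
  - simpl. rewrite (He 0%nat) by lia. ring.
  - rewrite Cpsum_S, IH, (He (S n)); [ring | lia | intros; apply He; lia].
Qed.

Lemma Cpsum_leading e z n : (forall k, (k < n)%nat -> e k = C0) ->
  Cpsum e z n = Cmul (e n) (Cpow z n).
Proof.
  intro He. destruct n as [|n]; [reflexivity|].
  rewrite Cpsum_S, Cpsum_zero by (intros; apply He; lia). ring.
Qed.

(* Uniqueness of power-series coefficients: if every high enough partial sum of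
   sum_n e_n x^n is O(x^{N+1}) as x -> 0+, all coefficients vanish. *)
Lemma coeffs_vanish (e : nat -> CC) (s : R) (N0 : nat) : 0 < s ->
  (forall N, (N0 <= N)%nat -> exists K, forall x, 0 < x <= s ->
     Cmod (Cpsum e (RtoC x) N) <= K * x ^ S N) ->
  forall n, e n = C0.
Proof.
  intros Hs HK n. induction n as [n IH] using Wf_nat.lt_wf_ind.
  set (N := max n N0). destruct (HK N ltac:(lia)) as [K HKx].
  set (C := sum_f_R0 (fun k => Cmod (e k)) N).
  assert (HC : 0 <= C) by (apply cond_pos_sum; intro; apply Cmod_ge0).
  apply Cmod_eq0, (le_small_eq0 _ (Rabs K + 2 * C) (Rmin s (1/2))); [apply Rmin_pos; lra | apply Cmod_ge0|].
  intros x [Hx0 Hx]. pose proof (Rmin_l s (1/2)). pose proof (Rmin_r s (1/2)).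
  (* the terms of degree in (n, N] contribute O(x^{n+1}) *)
  assert (Htail : Cmod (Csub (Cpsum e (RtoC x) N) (Cpsum e (RtoC x) n)) <= 2 * (C * x ^ S n)).
  { eapply Rle_trans.
    - apply (partial_sum_tail e (RtoC x) N C x HC ltac:(lra)); [|lia].
      intros k Hk. rewrite Cmod_monomial by lra. apply Rmult_le_compat_r; [apply pow_le; lra|].
      apply (sum_term_le (fun k => Cmod (e k))); auto using Cmod_ge0.
    - apply div_one_minus_le; [apply Rmult_le_pos; [|apply pow_le]|]; lra. }
  assert (Hsum := HKx x ltac:(lra)).
  rewrite (Cpsum_leading e (RtoC x) n IH) in Htail.
  assert (Hlead : Cmod (e n) * x ^ n <= K * x ^ S N + 2 * (C * x ^ S n)).
  { rewrite <- Cmod_monomial by lra.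
    replace (Cmul (e n) (Cpow (RtoC x) n)) with
      (Csub (Cpsum e (RtoC x) N) (Csub (Cpsum e (RtoC x) N) (Cmul (e n) (Cpow (RtoC x) n)))) by ring.
    eapply Rle_trans; [apply CmodB|]. lra. }
  assert (HKabs : K * x ^ S N <= Rabs K * x ^ S n).
  { pose proof (Rle_abs K). pose proof (Rabs_pos K). pose proof (pow_le x (S N) ltac:(lra)).
    pose proof (pow_decr x (S n) (S N) ltac:(lra) ltac:(lia)). nra. }
  assert (Hxn : 0 < x ^ n) by (apply pow_lt; lra).
  apply Rmult_le_reg_r with (x ^ n); [lra|]. simpl pow in *. nra.
Qed.

Lemma taylor_square_coeffs (F : CC -> CC) (a c : nat -> CC) (N0 : nat) :
  is_taylor_at0 F a ->
  (forall z N, (N0 <= N)%nat -> Cpsum c z N = Cmul (F z) (F z)) ->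
  forall n, cauchy_sq a n = c n.
Proof.
  intros [rho [Hrho Hcv]] Hpoly. set (s := rho / 2).
  assert (Hs : 0 < s) by (unfold s; lra).
  destruct (convergent_terms_bounded a (RtoC s) _ (Hcv (RtoC s)
              ltac:(rewrite CmodR, Rabs_pos_eq; unfold s; lra))) as [B [HB HBn]].
  assert (Hvanish : forall n, Csub (cauchy_sq a n) (c n) = C0).
  { apply (coeffs_vanish _ (s / 2) N0); [lra|]. intros N HN.
    exists ((12 + 2 * INR (S N)) * (B * B) / s ^ S N). intros x Hx.
    set (th := x / s).
    assert (Hth : 0 <= th <= 1/2).
    { unfold th. split; [left; apply Rdiv_lt_0_compat|apply Rmult_le_reg_r with s]; try lra.
      unfold Rdiv. rewrite Rmult_assoc, Rinv_l; lra. }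
    assert (Hscale : forall k, x ^ k = s ^ k * th ^ k).
    { intro k. rewrite <- Rpow_mult_distr. f_equal. unfold th. field. lra. }
    assert (Hterm : forall k, Cmod (Cmul (a k) (Cpow (RtoC x) k)) <= B * th ^ k).
    { intro k. specialize (HBn k). rewrite Cmod_monomial in HBn |- * by lra.
      rewrite Hscale, <- Rmult_assoc. apply Rmult_le_compat_r; [apply pow_le|]; lra. }
    replace (Cpsum (fun n => Csub (cauchy_sq a n) (c n)) (RtoC x) N) with
      (Csub (csum (fun n => Cmul (cauchy_sq a n) (Cpow (RtoC x) n)) N) (Cmul (F (RtoC x)) (F (RtoC x)))).
    2:{ rewrite <- (Hpoly (RtoC x) N HN), !Cpsum_csum, <- csum_sub. apply csum_ext. intros. ring. }
    eapply Rle_trans.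
    - apply (truncated_square_vs_limit a (RtoC x) _ N B th HB Hth Hterm).
      apply Hcv. rewrite CmodR, Rabs_pos_eq; unfold s in Hx; lra.
    - rewrite Hscale. apply Req_le. field. apply pow_nonzero. lra. }
  intro n. replace (c n) with (Cadd (cauchy_sq a n) (Copp (Csub (cauchy_sq a n) (c n)))) by ring.
  rewrite Hvanish. ring.
Qed.

Definition quad (t z : CC) : CC := Cadd (Csub (Cpow z 2) z) t.

Definition quad_coef (t : CC) (n : nat) : CC :=
  match n with 0 => t | 1 => Copp Defs.C1 | 2 => Defs.C1 | _ => C0 end.

Lemma quad_partial_sum t z N : (2 <= N)%nat -> Cpsum (quad_coef t) z N = quad t z.
Proof.
  intro HN. induction HN as [|N HN IH].
  - unfold quad. simpl. ring.
  - rewrite Cpsum_S, IH. destruct N as [|[|N]]; [lia | lia | simpl; ring].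
Qed.

Lemma f_t_sq t z : Cmul (f_t t z) (f_t t z) = quad t z.
Proof. apply Csqrt_sq. Qed.

Lemma taylor_coeffs_f_t t a : is_taylor_at0 (f_t t) a -> forall n, cauchy_sq a n = quad_coef t n.
Proof.
  intro Ha. apply (taylor_square_coeffs (f_t t) a (quad_coef t) 2 Ha).
  intros z N HN. rewrite f_t_sq. apply quad_partial_sum, HN.
Qed.

(* n rho^n -> 0 for 0 <= rho < 1 (via Bernoulli's inequality). *)
Lemma nat_mul_pow_vanishes rho eps : 0 <= rho < 1 -> 0 < eps ->
  exists N0, forall n, (n >= N0)%nat -> INR n * rho ^ n < eps.
Proof.
  intros Hrho Heps. set (y := sqrt ((1 + rho) / 2)).
  assert (Hy2 : y * y = (1 + rho) / 2) by (apply sqrt_sqrt; lra).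
  assert (Hy : 0 < y < 1).
  { assert (0 < y) by (apply sqrt_lt_R0; lra). split; [|nra]. auto. }
  set (eta := / y - 1).
  assert (Heta : 0 < eta).
  { unfold eta. assert (1 < / y) by (rewrite <- Rinv_1; apply Rinv_lt_contravar; lra). lra. }
  destruct (pow_lt_1_zero y ltac:(rewrite Rabs_pos_eq; lra) (eps * eta) ltac:(nra)) as [N0 HN0].
  exists N0. intros n Hn. specialize (HN0 n Hn). rewrite Rabs_pos_eq in HN0 by (apply pow_le; lra).
  pose proof (poly n eta Heta) as Hbernoulli.
  assert (Hone : (1 + eta) ^ n * y ^ n = 1).
  { rewrite <- Rpow_mult_distr. replace ((1 + eta) * y) with 1 by (unfold eta; field; lra).
    apply pow1. }
  assert (Hrho_y : rho ^ n <= y ^ n * y ^ n).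
  { rewrite <- Rpow_mult_distr. apply pow_incr. lra. }
  assert (Hyn : 0 <= y ^ n) by (apply pow_le; lra).
  pose proof (pos_INR n).
  assert (Hny : INR n * y ^ n * eta <= 1) by nra.
  apply Rle_lt_trans with (INR n * y ^ n * y ^ n); [nra|].
  apply Rmult_lt_reg_r with eta; [lra|]. nra.
Qed.

Lemma square_error_vanishes rho B eps : 0 <= rho < 1 -> 0 < eps ->
  exists N0, forall N, (N >= N0)%nat -> square_error rho B N < eps.
Proof.
  intros Hrho Heps. set (c := B * B / (1 - rho)).
  assert (Hc : 0 <= c) by (unfold c; apply Rmult_le_pos; [nra | left; apply Rinv_0_lt_compat; lra]).
  destruct (nat_mul_pow_vanishes rho (eps / (c + 1)) Hrho ltac:(apply Rdiv_lt_0_compat; lra))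
    as [N0 HN0].
  exists N0. intros N HN. specialize (HN0 (S N) ltac:(lia)).
  replace (square_error rho B N) with (INR (S N) * rho ^ S N * c) by (unfold square_error, c; field; lra).
  apply Rle_lt_trans with (eps / (c + 1) * c).
  - apply Rmult_le_compat_r; lra.
  - replace (eps / (c + 1) * c) with (eps - eps / (c + 1)) by (field; lra).
    pose proof (Rdiv_lt_0_compat eps (c + 1) Heps ltac:(lra)). lra.
Qed.

Lemma pow_lipschitz z w rho n : Cmod z <= rho -> Cmod w <= rho ->
  Cmod (Csub (Cpow z n) (Cpow w n)) <= INR n * rho ^ pred n * Cmod (Csub z w).
Proof.
  intros Hz Hw. pose proof (Cmod_ge0 z). pose proof (Cmod_ge0 (Csub z w)).
  induction n as [|n IH].
  - simpl. replace (Csub Defs.C1 Defs.C1) with C0 by ring. change C0 with (RtoC 0).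
    rewrite CmodR, Rabs_R0. lra.
  - replace (Csub (Cpow z (S n)) (Cpow w (S n))) with
      (Cadd (Cmul z (Csub (Cpow z n) (Cpow w n))) (Cmul (Cpow w n) (Csub z w))) by (simpl; ring).
    eapply Rle_trans; [apply CmodD|]. rewrite !CmodM, Cmod_pow.
    assert (Hwn : Cmod w ^ n <= rho ^ n) by (apply pow_incr; split; auto using Cmod_ge0).
    pose proof (Cmod_ge0 (Csub (Cpow z n) (Cpow w n))).
    assert (Cmod z * Cmod (Csub (Cpow z n) (Cpow w n)) <= rho * (INR n * rho ^ pred n * Cmod (Csub z w)))
      by (apply Rmult_le_compat; auto).
    assert (rho * (INR n * rho ^ pred n) = INR n * rho ^ n) by (destruct n; simpl; ring).
    assert (Cmod w ^ n * Cmod (Csub z w) <= rho ^ n * Cmod (Csub z w)) by (apply Rmult_le_compat_r; auto).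
    rewrite S_INR. simpl pred. nra.
Qed.

(* sum_{k <= N} k rho^{k-1} <= 1 / (1 - rho)^2, the derivative of the geometric series. *)
Lemma derivative_geometric_sum rho N : 0 <= rho < 1 ->
  sum_f_R0 (fun k => INR k * rho ^ pred k) N <= 1 / (1 - rho) ^ 2.
Proof.
  intro Hrho.
  assert (Hclosed : forall N, sum_f_R0 (fun k => INR k * rho ^ pred k) N * (1 - rho) ^ 2 =
     1 - INR (S N) * rho ^ N + INR N * rho ^ S N).
  { induction N0; [simpl; ring|]. rewrite tech5, Rmult_plus_distr_r, IHN0, !S_INR. simpl. ring. }
  apply Rmult_le_reg_r with ((1 - rho) ^ 2); [apply pow_lt; lra|].
  rewrite Hclosed. replace (1 / (1 - rho) ^ 2 * (1 - rho) ^ 2) with 1 by (field; lra).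
  pose proof (pow_le rho N ltac:(lra)). pose proof (pos_INR N). rewrite S_INR. simpl.
  assert (0 <= rho ^ N * (INR N + 1 - INR N * rho)) by (apply Rmult_le_pos; nra). nra.
Qed.

Lemma partial_sum_lipschitz a z w N rho B : Cmod z <= rho -> Cmod w <= rho -> rho < 1 -> 0 <= B ->
  (forall k, (k <= N)%nat -> Cmod (a k) <= B) ->
  Cmod (Csub (Cpsum a z N) (Cpsum a w N)) <= B / (1 - rho) ^ 2 * Cmod (Csub z w).
Proof.
  intros Hz Hw Hrho HB Ha. pose proof (Cmod_ge0 z). pose proof (Cmod_ge0 (Csub z w)).
  rewrite !Cpsum_csum, <- csum_sub.
  rewrite (csum_ext _ (fun k => Cmul (a k) (Csub (Cpow z k) (Cpow w k)))) by (intros; ring).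
  eapply Rle_trans; [apply csum_norm|].
  apply Rle_trans with (sum_f_R0 (fun k => INR k * rho ^ pred k * (B * Cmod (Csub z w))) N).
  - apply sum_Rle. intros k Hk. rewrite CmodM. pose proof (pow_lipschitz z w rho k Hz Hw).
    pose proof (Ha k Hk). pose proof (Cmod_ge0 (Csub (Cpow z k) (Cpow w k))).
    assert (0 <= INR k * rho ^ pred k) by (apply Rmult_le_pos; [apply pos_INR | apply pow_le; lra]).
    apply Rle_trans with (B * (INR k * rho ^ pred k * Cmod (Csub z w))); [|nra].
    apply Rmult_le_compat; auto using Cmod_ge0.
  - rewrite <- scal_sum. pose proof (derivative_geometric_sum rho N ltac:(lra)).
    pose proof (Rmult_le_pos B _ HB (Cmod_ge0 (Csub z w))).
    replace (B / (1 - rho) ^ 2 * Cmod (Csub z w)) with (B * Cmod (Csub z w) * (1 / (1 - rho) ^ 2))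
      by (field; lra).
    nra.
Qed.

Lemma partial_square_near_quad t a N z rho B : (2 <= N)%nat ->
  (forall n, cauchy_sq a n = quad_coef t n) -> 0 <= B -> 0 <= rho < 1 -> Cmod z <= rho ->
  (forall k, (k <= N)%nat -> Cmod (a k) <= B) ->
  Cmod (Csub (Cmul (Cpsum a z N) (Cpsum a z N)) (quad t z)) <= square_error rho B N.
Proof.
  intros HN Hconv HB Hrho Hz Ha.
  rewrite partial_square, (csum_ext _ (fun n => Cmul (quad_coef t n) (Cpow z n)))
    by (intros; rewrite Hconv; auto).
  rewrite <- Cpsum_csum, quad_partial_sum by auto.
  replace (Csub (Cadd (quad t z) (square_rem a z N)) (quad t z)) with (square_rem a z N) by ring.
  apply square_rem_bound; auto. intros k Hk. rewrite CmodM, Cmod_pow.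
  apply Rmult_le_compat; auto using Cmod_ge0; [apply pow_le, Cmod_ge0|].
  apply pow_incr. split; auto using Cmod_ge0.
Qed.

Lemma square_defect Pw Pz Q eps d :
  Cmod (Cmul Pw Pw) <= eps -> Cmod (Csub (Cmul Pz Pz) Q) <= eps ->
  Cmod (Csub Pz Pw) <= d -> 4 * (d * d) <= Cmod Q -> Cmod Q <= 6 * eps.
Proof.
  intros Hw Hz Hd HQ. rewrite CmodM in Hw.
  pose proof (Cmod_ge0 Pw). pose proof (Cmod_ge0 Pz). pose proof (Cmod_ge0 (Csub Pz Pw)).
  assert (HPz : Cmod Pz <= Cmod Pw + d).
  { replace Pz with (Cadd (Csub Pz Pw) Pw) by ring. eapply Rle_trans; [apply CmodD|]. lra. }
  assert (HQz : Cmod Q <= Cmod Pz * Cmod Pz + eps).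
  { replace Q with (Csub (Cmul Pz Pz) (Csub (Cmul Pz Pz) Q)) by ring.
    eapply Rle_trans; [apply CmodB|]. rewrite CmodM. lra. }
  assert (Cmod Pz * Cmod Pz <= (Cmod Pw + d) * (Cmod Pw + d)) by (apply Rmult_le_compat; lra).
  nra.
Qed.

Lemma quad_root t s : Cmul s s = Csub (RtoC (1/4)) t -> quad t (Cadd (RtoC (1/2)) s) = C0.
Proof.
  destruct t as [t1 t2], s as [p q].
  unfold quad, Cmul, Csub, Cadd, Copp, RtoC, Cre, Cim, C0, Defs.C1. simpl.
  intro H. injection H as H1 H2. f_equal; nra.
Qed.

Lemma quad_near_root t s h : Cmul s s = Csub (RtoC (1/4)) t ->
  quad t (Cadd (Cadd (RtoC (1/2)) s) (RtoC h)) = Cmul (RtoC h) (Cadd (Cadd s s) (RtoC h)).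
Proof.
  destruct t as [t1 t2], s as [p q].
  unfold quad, Cmul, Csub, Cadd, Copp, RtoC, Cre, Cim, C0, Defs.C1. simpl.
  intro H. injection H as H1 H2. f_equal; nra.
Qed.

Lemma near_root_lower s h : 0 <= h <= Cmod s ->
  h * Cmod s <= Cmod (Cmul (RtoC h) (Cadd (Cadd s s) (RtoC h))).
Proof.
  intro Hh. rewrite CmodM, CmodR, Rabs_pos_eq by lra.
  pose proof (CmodB_rev (Cmul (RtoC 2) s) (Copp (RtoC h))) as Hrev.
  replace (Csub (Cmul (RtoC 2) s) (Copp (RtoC h))) with (Cadd (Cadd s s) (RtoC h)) in Hrev
    by (destruct s; unfold Csub, RtoC, Cmul, Cadd, Copp, Cre, Cim; simpl; f_equal; ring).
  rewrite CmodN, CmodM, !CmodR, (Rabs_pos_eq 2), (Rabs_pos_eq h) in Hrev by lra.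
  apply Rmult_le_compat_l; lra.
Qed.

(* a_0^2 = t, so |a_0| <= 1 when t lies in the disc |t - 1/4| <= 1/4. *)
Lemma first_coeff_bound t a : (forall n, cauchy_sq a n = quad_coef t n) ->
  Cmod (Csub t (RtoC (1/4))) <= 1/4 -> Cmod (a 0%nat) <= 1.
Proof.
  intros Hconv Ht.
  assert (Ht0 : Cmod t <= 1/2).
  { replace t with (Cadd (Csub t (RtoC (1/4))) (RtoC (1/4))) by ring.
    eapply Rle_trans; [apply CmodD|]. rewrite CmodR, Rabs_pos_eq; lra. }
  pose proof (f_equal Cmod (Hconv 0%nat)) as Ha0.
  change (Cmod (Cmul (a 0%nat) (a 0%nat)) = Cmod t) in Ha0. rewrite CmodM in Ha0.
  pose proof (Cmod_ge0 (a 0%nat)). nra.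
Qed.

(* The constants of the argument; they depend on r and on the coefficient bound B only.
   All roots of q_t, |t - 1/4| = r, lie in |z| <= 1/2 + sqrt r < disc_radius r < 1. *)
Definition disc_radius (r : R) : R := 3/4 + sqrt r / 2.
Definition lip_const (r B : R) : R := B / (1 - disc_radius r) ^ 2.
Definition root_step (r B : R) : R :=
  Rmin (Rmin (1/4 - sqrt r / 2) (sqrt r)) (sqrt r / (4 * (lip_const r B * lip_const r B))).

Lemma sqrt_r_bounds r : 0 < r < 1/4 -> 0 < sqrt r < 1/2.
Proof.
  intro Hr. split; [apply sqrt_lt_R0; lra|].
  rewrite <- (sqrt_pow2 (1/2)) by lra. apply sqrt_lt_1; lra.
Qed.

Lemma root_step_pos r B : 0 < r < 1/4 -> 0 < B -> 0 < root_step r B.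
Proof.
  intros Hr HB. pose proof (sqrt_r_bounds r Hr). unfold root_step, lip_const, disc_radius.
  assert (0 < B / (1 - (3/4 + sqrt r / 2)) ^ 2) by (apply Rdiv_lt_0_compat; [|apply pow_lt]; lra).
  repeat apply Rmin_pos; try lra. apply Rdiv_lt_0_compat; nra.
Qed.

Lemma root_step_le r B :
  root_step r B <= 1/4 - sqrt r / 2 /\ root_step r B <= sqrt r /\
  root_step r B <= sqrt r / (4 * (lip_const r B * lip_const r B)).
Proof.
  unfold root_step. pose proof (Rmin_l (1/4 - sqrt r / 2) (sqrt r)).
  pose proof (Rmin_r (1/4 - sqrt r / 2) (sqrt r)).
  pose proof (Rmin_l (Rmin (1/4 - sqrt r / 2) (sqrt r)) (sqrt r / (4 * (lip_const r B * lip_const r B)))).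
  pose proof (Rmin_r (Rmin (1/4 - sqrt r / 2) (sqrt r)) (sqrt r / (4 * (lip_const r B * lip_const r B)))).
  lra.
Qed.

(* The heart of the proof: if |a_k| <= B for k <= N, comparing P_N^2 with q_t near
   a root w of q_t forces root_step * sqrt r <= 6 * square_error. *)
Lemma bounded_coeffs_defect r B N t a : 0 < r < 1/4 -> 0 < B -> (2 <= N)%nat ->
  Cmod (Csub t (RtoC (1/4))) = r -> (forall n, cauchy_sq a n = quad_coef t n) ->
  (forall k, (k <= N)%nat -> Cmod (a k) <= B) ->
  root_step r B * sqrt r <= 6 * square_error (disc_radius r) B N.
Proof.
  intros Hr HB HN Ht Hconv Ha.
  pose proof (sqrt_r_bounds r Hr) as Hsr. pose proof (root_step_pos r B Hr HB) as Hh.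
  destruct (root_step_le r B) as (Hh1 & Hh2 & Hh3).
  assert (HL : 0 < lip_const r B)
    by (unfold lip_const, disc_radius; apply Rdiv_lt_0_compat; [|apply pow_lt]; lra).
  assert (Hrho : 0 <= disc_radius r < 1) by (unfold disc_radius; lra).
  assert (Hroom : 1/2 + sqrt r + root_step r B <= disc_radius r) by (unfold disc_radius; lra).
  set (sr := sqrt r) in *. set (rho := disc_radius r) in *. set (h := root_step r B) in *.
  set (L := lip_const r B) in *.
  set (s := Csqrt (Csub (RtoC (1/4)) t)).
  assert (Hss : Cmul s s = Csub (RtoC (1/4)) t) by apply Csqrt_sq.
  assert (Hs : Cmod s = sr) by (unfold s; rewrite Cmod_Csqrt, CmodB_sym, Ht; auto).
  set (w := Cadd (RtoC (1/2)) s). set (z := Cadd w (RtoC h)).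
  assert (Hw : Cmod w <= 1/2 + sr).
  { unfold w. eapply Rle_trans; [apply CmodD|]. rewrite CmodR, Rabs_pos_eq; lra. }
  assert (Hz : Cmod z <= rho).
  { unfold z. eapply Rle_trans; [apply CmodD|]. rewrite CmodR, Rabs_pos_eq; lra. }
  assert (Hqz : h * sr <= Cmod (quad t z)).
  { unfold z, w. rewrite quad_near_root by auto. rewrite <- Hs. apply near_root_lower. lra. }
  apply Rle_trans with (Cmod (quad t z)); [lra|].
  apply (square_defect (Cpsum a w N) (Cpsum a z N) (quad t z) _ (L * h)).
  - replace (Cmul (Cpsum a w N) (Cpsum a w N)) with
      (Csub (Cmul (Cpsum a w N) (Cpsum a w N)) (quad t w)) by (unfold w; rewrite quad_root; auto; ring).
    apply partial_square_near_quad; auto; lra.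
  - apply partial_square_near_quad; auto; lra.
  - eapply Rle_trans; [apply (partial_sum_lipschitz a z w N rho B); auto; lra|].
    replace (Csub z w) with (RtoC h) by (unfold z; ring). rewrite CmodR, Rabs_pos_eq by lra.
    apply Req_le. reflexivity.
  - assert (h * (4 * (L * L)) <= sr).
    { apply Rmult_le_reg_r with (/ (4 * (L * L))); [apply Rinv_0_lt_compat; nra|].
      rewrite Rmult_assoc, Rinv_r by nra. lra. }
    nra.
Qed.

Theorem lemma5p7 (r M : R) (hr0 : 0 < r) (hr1 : r < 1/4) (hM : 0 < M) :
  exists N : nat, forall t : CC, Cmod (Csub t (RtoC (1/4))) = r ->
    forall a : nat -> CC, is_taylor_at0 (f_t t) a ->
      exists n : nat, (1 <= n <= N)%nat /\ Cmod (a n) > M.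
Proof.
  set (B := M + 1). set (rho := disc_radius r).
  pose proof (sqrt_r_bounds r (conj hr0 hr1)) as Hsr.
  pose proof (root_step_pos r B (conj hr0 hr1) ltac:(unfold B; lra)) as Hh.
  destruct (square_error_vanishes rho B (root_step r B * sqrt r / 6)
              ltac:(unfold rho, disc_radius; lra) ltac:(nra)) as [N0 HN0].
  exists (max N0 2). intros t Ht a Ha. set (N := max N0 2).
  apply NNPP. intro Hnone.
  pose proof (taylor_coeffs_f_t t a Ha) as Hconv.
  pose proof (first_coeff_bound t a Hconv ltac:(lra)) as Ha0.
  assert (HaN : forall k, (k <= N)%nat -> Cmod (a k) <= B).
  { intros [|k] Hk; [unfold B; lra|]. apply Rnot_lt_le. intro Hbig.
    apply Hnone. exists (S k). split; [lia | unfold B in Hbig; lra]. }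
  pose proof (bounded_coeffs_defect r B N t a (conj hr0 hr1) ltac:(unfold B; lra)
                ltac:(unfold N; lia) Ht Hconv HaN) as Hdefect.
  specialize (HN0 N ltac:(unfold N; lia)). fold rho in Hdefect. lra.
Qed.
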